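(* For every $\varepsilon>0$ there exists $C_\varepsilon>0$ such that for every integer $N\ge1$, \[ \max_{\alpha\in\mathcal O_N}\ \sum_{\beta\in\mathcal O_N}\sqrt{\Gamma_{\alpha\beta}}\le C_\varepsilon N^{4+\varepsilon}. \]
   Context: For an integer $N\ge1$, $\Lambda_N:=\{k\in\mathbb Z^3\setminus\{0\}:|k|_\infty\le N\}$. The full octahedral group $O_h$ is the group of the 48 signed coordinate permutations of $\mathbb Z^3$; it acts on $\Lambda_N$ and $\mathcal O_N:=\Lambda_N/O_h$ is the set of orbits. For $\alpha,\beta\in\mathcal O_N$, $\Gamma_{\alpha\beta}:=\#\{(k,p,q):k\in\alpha,\ p\in\beta,\ q=k-p\in\Lambda_N\}$. *)

From HB Require Import structures.
From mathcomp Require Import all_boot all_order all_algebra all_fingroup.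
From mathcomp Require Import all_classical all_reals all_analysis.
Set Implicit Arguments. Unset Strict Implicit. Unset Printing Implicit Defensive.
Import Order.TTheory GRing.Theory Num.Theory.
Local Open Scope ring_scope.

Definition pt3 := (int * int * int)%type.

Definition coord (k : pt3) (i : 'I_3) : int :=
  if val i == 0%N then k.1.1 else if val i == 1%N then k.1.2 else k.2.

Definition mk3 (f : 'I_3 -> int) : pt3 := (f (inord 0), f (inord 1), f (inord 2)).

Definition sub3 (k p : pt3) : pt3 := (k.1.1 - p.1.1, k.1.2 - p.1.2, k.2 - p.2).

Definition inLambda (N : nat) (k : pt3) : bool :=
  (k != (0, 0, 0)) && [forall i : 'I_3, `|coord k i| <= N%:Z].

Definition rng (N : nat) : seq int := [seq i%:Z - N%:Z | i <- iota 0 (N + N).+1].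
Definition LambdaN (N : nat) : seq pt3 :=
  [seq k <- [seq (xy, z) | xy <- [seq (x, y) | x <- rng N, y <- rng N], z <- rng N] | inLambda N k].

Definition pt (N : nat) := seq_sub (LambdaN N).

(* O_h: the 48 signed coordinate permutations, (s, e) acts by
   (g k)_i = (-1)^(e i) * k_(s i) *)
Definition Oh := ({perm 'I_3} * {ffun 'I_3 -> bool})%type.
Definition act (g : Oh) (k : pt3) : pt3 :=
  mk3 (fun i => (-1) ^+ (g.2 i) * coord k (g.1 i)).

Definition orbit3 (N : nat) (k : pt N) : {set pt N} :=
  [set p : pt N | [exists g : Oh, act g (val k) == val p]].
Definition ON (N : nat) : {set {set pt N}} := [set orbit3 k | k : pt N].

(* Gamma_{alpha beta} = #{(k,p,q) : k in alpha, p in beta, q = k - p in Lambda_N};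
   q is determined by (k,p), so we count pairs (k,p). *)
Definition Gamma (N : nat) (alpha beta : {set pt N}) : nat :=
  #|[set kp : pt N * pt N |
      [&& kp.1 \in alpha, kp.2 \in beta & inLambda N (sub3 (val kp.1) (val kp.2))]]|.

(* The bound is far from sharp: every orbit has at most #|O_h| = 48 points,
   so each Gamma is at most 48^2 and each square root at most 48, while
   there are at most #|Lambda_N| <= (2N+1)^3 <= 27 N^3 orbits.  Hence the sum
   is O(N^3), which is below C N^(4+eps) for N >= 1. *)
From Pilot Require Import Defs.
From HB Require Import structures.
From mathcomp Require Import all_boot all_order all_algebra all_fingroup.
From mathcomp Require Import all_classical all_reals all_analysis.
From mathcomp Require Import zify lra.
Import Order.TTheory GRing.Theory Num.Theory.
Local Open Scope ring_scope.

Lemma card_Oh : #|{: Oh}| = 48%N.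
Proof. by rewrite card_prod card_Sn card_ffun !card_ord card_bool. Qed.

Lemma card_orbit3 N (k : pt N) : (#|orbit3 k| <= #|{: Oh}|)%N.
Proof.
pose f (g : Oh) : pt N := odflt k (insub (Defs.act g (val k))).
rewrite -cardsT (leq_trans _ (leq_imset_card f _)) //.
apply/subset_leq_card/fintype.subsetP => p.
rewrite inE => /existsP [g /eqP gk_p].
by apply/imsetP; exists g; rewrite ?inE // /f gk_p valK.
Qed.

Lemma card_ON_mem N (alpha : {set pt N}) : alpha \in ON N -> (#|alpha| <= 48)%N.
Proof. by move=> /imsetP [k _ ->]; rewrite -card_Oh card_orbit3. Qed.

Lemma Gamma_le_card N (alpha beta : {set pt N}) :
  (Gamma alpha beta <= #|alpha| * #|beta|)%N.
Proof.
rewrite -cardsX; apply/subset_leq_card/fintype.subsetP => -[k p].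
by rewrite !inE /= => /and3P [-> -> _].
Qed.

Lemma card_pt N : (#|{: pt N}| <= (N + N).+1 ^ 3)%N.
Proof.
rewrite cardE -(size_map val) (@leq_trans (size (LambdaN N))) //.
  apply: uniq_leq_size; first by rewrite (map_inj_uniq val_inj) enum_uniq.
  by move=> _ /mapP [k _ ->]; apply: valP.
rewrite size_filter (leq_trans (count_size _ _)) //.
by rewrite !size_allpairs size_map size_iota -[3%N]/(1 + 1 + 1)%N !expnD !expn1.
Qed.

Lemma card_ON N : (#|ON N| <= (N + N).+1 ^ 3)%N.
Proof. exact: leq_trans (leq_imset_card _ _) (card_pt N). Qed.

Lemma sqrt_Gamma_ON (R : realType) {N} {alpha : {set pt N}} :
  alpha \in ON N ->
  forall beta, beta \in ON N -> Num.sqrt ((Gamma alpha beta)%:R : R) <= 48.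
Proof.
move=> alpha_ON beta beta_ON; rewrite -(@ger0_norm R 48) // -sqrtr_sqr.
rewrite ler_sqrt ?ler0n // expr2 -natrM ler_nat.
by rewrite (leq_trans (Gamma_le_card _ alpha beta)) // leq_mul ?card_ON_mem.
Qed.

Lemma exprn_le_powR (R : realType) (x r : R) (n : nat) :
  1 <= x -> n%:R <= r -> x ^+ n <= x `^ r.
Proof.
move=> x_ge1 n_le_r; rewrite -powR_mulrn ?(le_trans ler01 x_ge1) //.
exact: ler_powR.
Qed.

Theorem proposition4p8 (R : realType) :
  forall eps : R, 0 < eps ->
  exists C : R, 0 < C /\
    forall N : nat, (1 <= N)%N ->
    forall alpha : {set pt N}, alpha \in ON N ->
      \sum_(beta in ON N) Num.sqrt ((Gamma alpha beta)%:R : R)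
        <= C * (N%:R `^ (4 + eps)).
Proof.
move=> eps eps_gt0; exists (27 * 48); split=> // N N_ge1 alpha alpha_ON.
have card_ON_cube : (#|ON N| <= 27 * N ^ 3)%N.
  apply: leq_trans (card_ON N) (@leq_trans ((3 * N) ^ 3) _ _ _ _).
    by rewrite leq_exp2r //; lia.
  by rewrite expnMn.
have cube_le_pow : N%:R ^+ 3 <= N%:R `^ (4 + eps) :> R.
  by apply: exprn_le_powR; [rewrite ler1n | lra].
rewrite (le_trans (ler_sum _ (sqrt_Gamma_ON R alpha_ON))) //.
rewrite sumr_const -[48 *+ _]mulr_natl mulrAC.
apply: ler_wpM2r; first exact: ler0n.
apply: (@le_trans _ _ (27 * N%:R ^+ 3)); first by rewrite -natrX -natrM ler_nat.
by apply: ler_wpM2l; first exact: ler0n.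
Qed.
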